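(* Let $\gamma>0$, let $\mathbf{b},\tilde{\mathbf{b}}\in\mathbb{R}^m$, and let $\mathbf{u}^*_\gamma$ and $\tilde{\mathbf{u}}^*_\gamma$ be solutions of the stabilized-regularized system $$\big((\mathbf{I}+\gamma\mathbf{A}^t\mathbf{A})\mathbf{A}^t\mathbf{A}+\gamma\mathbf{L}^t\mathbf{L}\big)\mathbf{u}=(\mathbf{I}+\gamma\mathbf{A}^t\mathbf{A})\mathbf{A}^t\mathbf{c}+\gamma\mathbf{L}^t\mathbf{g}$$ with right-hand data $\mathbf{c}=\mathbf{b}$ and $\mathbf{c}=\tilde{\mathbf{b}}$ respectively (same $\mathbf{A},\mathbf{L},\mathbf{g}$). Then $$\|\mathbf{A}\mathbf{u}^*_\gamma-\mathbf{A}\tilde{\mathbf{u}}^*_\gamma\|_m\le\|(\mathbf{I}+\gamma\mathbf{A}\mathbf{A}^t)(\mathbf{b}-\tilde{\mathbf{b}})\|_m.$$ Moreover, if $m\ge n$ and $\mathbf{A}$ has full column rank $n$, then $$\|\mathbf{u}^*_\gamma-\tilde{\mathbf{u}}^*_\gamma\|_n\le\frac{1}{\sqrt{\lambda_n}}\|(\mathbf{I}+\gamma\mathbf{A}\mathbf{A}^t)(\mathbf{b}-\tilde{\mathbf{b}})\|_m,$$ where $\lambda_n>0$ is the smallest eigenvalue of $\mathbf{A}^t\mathbf{A}$.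
   Context: $\mathbf{A}\in\mathbb{R}^{m\times n}$, $\mathbf{L}\in\mathbb{R}^{p\times n}$, $\mathbf{g}\in\mathbb{R}^p$, $\mathbf{I}$ denotes identity matrices of appropriate size, $\|\cdot\|_m,\|\cdot\|_n$ are Euclidean norms. The displayed system is the normal equation of minimizing $\mathcal{J}_\gamma(\mathbf{v})=\tfrac12\|\mathbf{A}\mathbf{v}-\mathbf{c}\|_m^2-\tfrac12\|\mathbf{c}\|_m^2+\frac{\gamma}{2}\|\mathbf{A}^t\mathbf{A}\mathbf{v}-\mathbf{A}^t\mathbf{c}\|_n^2+\frac{\gamma}{2}\|\mathbf{L}\mathbf{v}-\mathbf{g}\|_p^2$ over $\mathbb{R}^n$, with $\|\cdot\|_p$ the Euclidean norm on $\mathbb{R}^p$. *)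

From HB Require Import structures.
From mathcomp Require Import all_boot all_order all_algebra.
Set Implicit Arguments. Unset Strict Implicit. Unset Printing Implicit Defensive.
Import Order.TTheory GRing.Theory Num.Theory.
Local Open Scope ring_scope.

Definition enorm (R : rcfType) (k : nat) (v : 'cV[R]_k) : R :=
  Num.sqrt (\sum_(i < k) (v i 0) ^+ 2).

Definition solves_stab_reg (R : rcfType) (m n p : nat)
  (A : 'M[R]_(m, n)) (L : 'M[R]_(p, n)) (gv : 'cV[R]_p) (gamma : R)
  (c : 'cV[R]_m) (u : 'cV[R]_n) : Prop :=
  ((1%:M + gamma *: (A^T *m A)) *m (A^T *m A) + gamma *: (L^T *m L)) *m u
  = (1%:M + gamma *: (A^T *m A)) *m (A^T *m c) + gamma *: (L^T *m gv).

Definition smallest_eigenvalue (R : rcfType) (n : nat) (M : 'M[R]_n) (lam : R) : Prop :=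
  eigenvalue M lam /\ (forall mu, eigenvalue M mu -> lam <= mu).

From HB Require Import structures.
From mathcomp Require Import all_boot all_order all_algebra.
From mathcomp Require Import ring lra.
From mathcomp Require Import complex.
Import Order.TTheory GRing.Theory Num.Theory.
Local Open Scope ring_scope.

(* Write M := (I + g A^t A) A^t A + g L^t L.  Subtracting the two systems gives
   M d = A^t f with d = u - ut and f = (I + g A A^t)(b - bt).  Testing against d,
   <A d, f> = d^t M d = |A d|^2 + g |A^t A d|^2 + g |L d|^2 >= |A d|^2, and then
   |f|^2 = |f - A d|^2 + 2 <A d, f> - |A d|^2 >= |A d|^2.  With full column rank the
   smallest eigenvalue lam of A^t A is positive and the Rayleigh bound
   lam |d|^2 <= |A d|^2, obtained from the spectral theorem over R[i], gives the
   second estimate. *)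

Section DotProduct.
Context {R : comPzRingType}.

Definition dotmx {k} (x y : 'cV[R]_k) : R := (x^T *m y) 0 0.
Definition sqnorm {k} (x : 'cV[R]_k) : R := dotmx x x.

Lemma dotmxC {k} (x y : 'cV[R]_k) : dotmx x y = dotmx y x.
Proof. by rewrite /dotmx -[in LHS](trmxK y) -trmx_mul mxE. Qed.

Lemma dotmxDr {k} (x y z : 'cV[R]_k) : dotmx x (y + z) = dotmx x y + dotmx x z.
Proof. by rewrite /dotmx mulmxDr mxE. Qed.

Lemma dotmxZr {k} (a : R) (x y : 'cV[R]_k) : dotmx x (a *: y) = a * dotmx x y.
Proof. by rewrite /dotmx -scalemxAr mxE. Qed.

Lemma dotmx_mull {k l} (M : 'M[R]_(l, k)) (x : 'cV[R]_k) (y : 'cV[R]_l) :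
  dotmx (M *m x) y = dotmx x (M^T *m y).
Proof. by rewrite /dotmx trmx_mul mulmxA. Qed.

Lemma sqnorm_mul {k l} (M : 'M[R]_(l, k)) (x : 'cV[R]_k) :
  sqnorm (M *m x) = dotmx x (M^T *m M *m x).
Proof. by rewrite /sqnorm dotmx_mull mulmxA. Qed.

Lemma sqnormB {k} (x y : 'cV[R]_k) :
  sqnorm (x - y) = sqnorm x - 2 * dotmx x y + sqnorm y.
Proof.
have := dotmxC y x; rewrite /sqnorm /dotmx => yx.
have subE (M N : 'M[R]_1) : (M - N) 0 0 = M 0 0 - N 0 0 by rewrite !mxE.
by rewrite !linearB /= !mulmxBl !subE yx; ring.
Qed.

Lemma sqnormE {k} (x : 'cV[R]_k) : sqnorm x = \sum_(i < k) x i 0 ^+ 2.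
Proof. by rewrite /sqnorm /dotmx mxE; apply: eq_bigr => i _; rewrite mxE expr2. Qed.

Lemma trmx_gramian {m n} (A : 'M[R]_(m, n)) : (A^T *m A)^T = A^T *m A.
Proof. by rewrite trmx_mul trmxK. Qed.

End DotProduct.

Section Sqnorm.
Context {R : realDomainType}.

Lemma sqnorm_ge0 {k} (x : 'cV[R]_k) : 0 <= sqnorm x.
Proof. by rewrite sqnormE; apply: sumr_ge0 => i _; apply: sqr_ge0. Qed.

Lemma sqnorm_eq0 {k} (x : 'cV[R]_k) : (sqnorm x == 0) = (x == 0).
Proof.
apply/idP/eqP => [|->]; last by rewrite sqnormE big1 // => i _; rewrite mxE expr0n.
rewrite sqnormE psumr_eq0 => [/allP x0|i _]; last exact: sqr_ge0.
apply/matrixP => i j; rewrite ord1 mxE.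
by have := x0 i (mem_index_enum i); rewrite implyTb sqrf_eq0 => /eqP.
Qed.

Lemma sqnorm_gt0 {k} (x : 'cV[R]_k) : x != 0 -> 0 < sqnorm x.
Proof. by move=> x0; rewrite lt_def sqnorm_eq0 x0 sqnorm_ge0. Qed.

End Sqnorm.

Lemma enorm_sqnorm {R : rcfType} {k} (x : 'cV[R]_k) : enorm x = Num.sqrt (sqnorm x).
Proof. by rewrite sqnormE. Qed.

Lemma enorm_le_sqnorm {R : rcfType} {k l} (x : 'cV[R]_k) (y : 'cV[R]_l) (lam : R) :
  0 < lam -> lam * sqnorm x <= sqnorm y ->
  enorm x <= (Num.sqrt lam)^-1 * enorm y.
Proof.
move=> lam_gt0 le_xy; have lam_ge0 := ltW lam_gt0.
rewrite !enorm_sqnorm -sqrtrV // -sqrtrM ?invr_ge0 // ler_sqrt.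
  by rewrite ler_pdivlMl.
by rewrite mulr_ge0 ?invr_ge0 ?sqnorm_ge0.
Qed.

Section Rayleigh.
Local Open Scope sesquilinear_scope.

Lemma eigenvalue_spectral_diag {C : numClosedFieldType} {n} (M : 'M[C]_n) j :
  M \is normalmx -> eigenvalue M (spectral_diag M 0 j).
Proof.
move=> /orthomx_spectralP; move: (spectral_unit M).
move: (spectralmx M) (spectral_diag M) => P D P_unit M_eq.
apply/eigenvalueP; exists (row j P).
  rewrite M_eq !mulmxA -row_mul mulmxV // -row_mul mul1mx -row_mul mul_diag_mx.
  by apply/rowP => k; rewrite !mxE.
rewrite rowE mulmx_free_eq0 ?row_free_unit //.
by apply/eqP => /matrixP /(_ 0 j) /eqP; rewrite !mxE !eqxx oner_eq0.
Qed.

Lemma normalmx_rayleigh_ge {C : numClosedFieldType} {n} (M : 'M[C]_n) (lam : C) :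
  M \is normalmx -> (forall j, lam <= spectral_diag M 0 j) ->
  forall v : 'rV[C]_n, lam * (v *m v^t*) 0 0 <= (v *m M *m v^t*) 0 0.
Proof.
move=> /orthomx_spectralP M_eq lam_le v; set P := spectralmx M in M_eq.
have P_unitary : P \is unitarymx by exact: spectral_unitarymx.
have PtP : P^t* *m P = 1%:M by rewrite -invmx_unitary // mulVmx ?spectral_unit.
pose w := v *m P^t*.
have wt : w^t* = P *m v^t* by rewrite /w trmx_mul map_mxM trmxCK.
have -> : v *m v^t* = w *m w^t* by rewrite wt /w mulmxA -(mulmxA v) PtP mulmx1.
have -> : v *m M *m v^t* = w *m diag_mx (spectral_diag M) *m w^t*.
  by rewrite wt /w [in LHS]M_eq invmx_unitary // !mulmxA.
rewrite mul_mx_diag !mxE mulr_sumr; apply: ler_sum => j _; rewrite !mxE.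
rewrite [X in _ <= X]mulrAC [X in _ <= X]mulrC.
by apply: ler_wpM2r; [exact: mul_conjC_ge0 | exact: lam_le].
Qed.

Lemma symmetric_rayleigh_ge {R : rcfType} {n} (B : 'M[R]_n) (lam : R) :
  B^T = B -> (forall mu, eigenvalue B mu -> lam <= mu) ->
  forall x : 'cV[R]_n, lam * sqnorm x <= dotmx x (B *m x).
Proof.
move=> B_sym lam_min x; pose toC := real_complex R; pose Bc := B ^ toC.
have Bc_herm : Bc \is hermsymmx.
  apply: realsym_hermsym; last by apply/mxOverP => i j; rewrite mxE complex_real.
  by apply/is_hermitianmxP; rewrite expr0 scale1r map_mx_id // /Bc map_trmx B_sym.
have lam_le j : lam%:C%C <= spectral_diag Bc 0 j.
  have /mxOverP /(_ 0 j) /complex_realP [k Dk] := hermitian_spectral_diag_real Bc_herm.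
  rewrite Dk lecR; apply: lam_min; rewrite -(eigenvalue_map toC).
  have := eigenvalue_spectral_diag Bc j (hermitian_normalmx Bc_herm).
  by rewrite Dk.
have := normalmx_rayleigh_ge Bc _ (hermitian_normalmx Bc_herm) lam_le (map_mx toC x^T).
have xt : (map_mx toC x^T)^t* = x ^ toC.
  by apply/matrixP => i j; rewrite !mxE conj_Creal // complex_real.
rewrite xt /Bc -!map_mxM !mxE -rmorphM lecR.
by rewrite /sqnorm /dotmx mulmxA !mxE.
Qed.

End Rayleigh.

Section StabilizedRegularization.
Context {R : rcfType} {m n p : nat} {A : 'M[R]_(m, n)} {L : 'M[R]_(p, n)} {gamma : R}.

Definition stab_reg_mx : 'M[R]_n :=
  (1%:M + gamma *: (A^T *m A)) *m (A^T *m A) + gamma *: (L^T *m L).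

Lemma stab_reg_mx_sub {gv : 'cV[R]_p} {b bt : 'cV[R]_m} {u ut : 'cV[R]_n} :
  solves_stab_reg A L gv gamma b u -> solves_stab_reg A L gv gamma bt ut ->
  stab_reg_mx *m (u - ut) = A^T *m ((1%:M + gamma *: (A *m A^T)) *m (b - bt)).
Proof.
rewrite /solves_stab_reg => Hb Hbt.
rewrite mulmxBr Hb Hbt opprD addrACA subrr addr0 -!mulmxBr !mulmxA.
by rewrite mulmxDl mulmxDr mulmx1 mul1mx -!scalemxAl -!scalemxAr !mulmxA.
Qed.

Lemma dotmx_stab_reg_mx (d : 'cV[R]_n) :
  dotmx d (stab_reg_mx *m d)
  = sqnorm (A *m d) + gamma * sqnorm (A^T *m A *m d) + gamma * sqnorm (L *m d).
Proof.
rewrite /stab_reg_mx !mulmxDl mul1mx -!scalemxAl !dotmxDr !dotmxZr.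
by rewrite !sqnorm_mul trmx_mul trmxK !mulmxA.
Qed.

Lemma sqnorm_le_stab_reg {d : 'cV[R]_n} {f : 'cV[R]_m} :
  0 <= gamma -> stab_reg_mx *m d = A^T *m f -> sqnorm (A *m d) <= sqnorm f.
Proof.
move=> gamma_ge0 Mdf.
have le_Ad_f : sqnorm (A *m d) <= dotmx f (A *m d).
  rewrite dotmxC dotmx_mull -Mdf dotmx_stab_reg_mx -addrA lerDl.
  by rewrite addr_ge0 // mulr_ge0 // sqnorm_ge0.
have := sqnorm_ge0 (f - A *m d); rewrite sqnormB; lra.
Qed.

End StabilizedRegularization.

Arguments stab_reg_mx {R m n p} A L gamma.

Lemma gramian_eigenvalue_gt0 {R : realFieldType} {m n} (A : 'M[R]_(m, n)) (lam : R) :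
  \rank A = n -> eigenvalue (A^T *m A) lam -> 0 < lam.
Proof.
move=> rkA /eigenvalueP [v eig_v v_neq0].
have Av_neq0 : A *m v^T != 0.
  by rewrite -trmx_eq0 trmx_mul trmxK mulmx_free_eq0 // /row_free mxrank_tr rkA.
have Av_sqnorm : sqnorm (A *m v^T) = lam * sqnorm v^T.
  have AtAv : A^T *m A *m v^T = lam *: v^T.
    by rewrite -[LHS]trmxK trmx_mul trmxK trmx_gramian eig_v linearZ.
  by rewrite sqnorm_mul AtAv dotmxZr.
have := sqnorm_gt0 _ Av_neq0; rewrite Av_sqnorm.
by rewrite pmulr_lgt0 // sqnorm_gt0 // trmx_eq0.
Qed.

Theorem theorem3 (R : rcfType) (m n p : nat)
  (A : 'M[R]_(m, n)) (L : 'M[R]_(p, n)) (gv : 'cV[R]_p) (gamma : R)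
  (b bt : 'cV[R]_m) (u ut : 'cV[R]_n) :
  0 < gamma ->
  solves_stab_reg A L gv gamma b u ->
  solves_stab_reg A L gv gamma bt ut ->
  enorm (A *m u - A *m ut) <= enorm ((1%:M + gamma *: (A *m A^T)) *m (b - bt))
  /\
  ((n <= m)%N -> \rank A = n ->
   forall lam : R, smallest_eigenvalue (A^T *m A) lam ->
   enorm (u - ut) <= (Num.sqrt lam)^-1 * enorm ((1%:M + gamma *: (A *m A^T)) *m (b - bt))).
Proof.
move=> gamma_gt0 Hb Hbt.
have le_Ad_f := sqnorm_le_stab_reg (ltW gamma_gt0) (stab_reg_mx_sub Hb Hbt).
split.
  by rewrite -mulmxBr !enorm_sqnorm ler_sqrt ?sqnorm_ge0.
(* [n <= m] is implied by [\rank A = n]. *)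
move=> _ rkA lam [eig_lam lam_min].
apply: enorm_le_sqnorm; first exact: gramian_eigenvalue_gt0 rkA eig_lam.
apply: le_trans le_Ad_f; rewrite sqnorm_mul.
exact: symmetric_rayleigh_ge _ _ (trmx_gramian A) lam_min _.
Qed.
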